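(* Let $q$ be a positive integer and let $\mathcal{D}_1,\mathcal{D}_2$ be nonempty finite subsets of $[q]\times 2^{[q]}$ such that every $(b,B)\in\mathcal{D}_1\cup\mathcal{D}_2$ has $|B|\ge 2$. Then the following are equivalent: (1) $\mathcal{E}_{\mathcal{D}_1}=\mathcal{E}_{\mathcal{D}_2}$; (2) ${\sf Div}(\mathcal{E}_{\mathcal{D}_1})={\sf Div}(\mathcal{E}_{\mathcal{D}_2})$; (3) $\overline{\mathcal{D}_1}=\overline{\mathcal{D}_2}$; (4) $\min(\overline{\mathcal{D}_1})=\min(\overline{\mathcal{D}_2})$.
   Context: Divisibility relations. Let $\Lambda$ be a finite nonempty set and $U=\{u_i:i\in\Lambda\}$ a set of monomials in a polynomial ring over a field, indexed so that $u_i=u_j$ implies $i=j$. A divisibility relation on $U$ is a pair $(b,B)$ with $b\in\Lambda$ and $\emptyset\ne B\subseteq\Lambda$ such that $u_b\mid \mathrm{lcm}(u_i: i\in B)$; ${\sf Div}(U)$ is the set of all of them. A pair $(b,B)$ is trivial if $b\in B$. $(b,B)^{\sf ex}=\{(b,C): B\subseteq C\subseteq \Lambda\}$. $(b,B)\circ(c,C)=(b,(B\smallsetminus\{c\})\cup C)$. For $\mathcal{D}\subseteq\Lambda\times 2^\Lambda$: $\mathcal{D}^\circ$ is the set of all compositions $(b_1,B_1)\circ\cdots\circ(b_s,B_s)$ with $s\ge1$, $(b_i,B_i)\in\mathcal{D}$, with every possible bracketing; $\mathcal{D}^{\sf ex}=\bigcup_{(b,B)\in\mathcal{D}}(b,B)^{\sf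 ex}$; $\Lambda^{\sf triv}=\{(b,B): b\in B\}$; $\overline{\mathcal{D}}=(\mathcal{D}^\circ)^{\sf ex}\cup\Lambda^{\sf triv}$. $\min(\mathcal{D})$ is the set of nontrivial $(b,B)\in\mathcal{D}$ such that no $(b,C)\in\mathcal{D}$ has $C\subsetneq B$. Here $\Lambda=[q]$. $\mathcal{D}$-extremal ideals. Let $\mathsf k$ be a field and $S_{[q]}=\mathsf k[y_A:\emptyset\ne A\subseteq[q]]$. For $\mathcal{D}\subseteq [q]\times(2^{[q]}\smallsetminus\{\emptyset\})$ let $Q(\mathcal{D})=\{A\subseteq[q]: A\ne\emptyset,\ A\cap B\ne\emptyset \text{ for all }(b,B)\in\mathcal{D}\text{ with } b\in A\}$, $\varepsilon_{\mathcal{D},i}=\prod_{A\in Q(\mathcal{D}),\, i\in A} y_A$, and $\mathcal{E}_{\mathcal{D}}=(\varepsilon_{\mathcal{D},1},\ldots,\varepsilon_{\mathcal{D},q})\subseteq S_{[q]}$. ${\sf Div}(\mathcal{E}_{\mathcal{D}})$ denotes ${\sf Div}(\{\varepsilon_{\mathcal{D},1},\ldots,\varepsilon_{\mathcal{D},q}\})$ with indexing set $[q]$. *)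

From HB Require Import structures.
From mathcomp Require Import all_boot all_order all_algebra.
From mathcomp Require Import mpoly.
Set Implicit Arguments. Unset Strict Implicit. Unset Printing Implicit Defensive.
Import GRing.Theory.
Local Open Scope ring_scope.

Definition pairq (q : nat) := ('I_q * {set 'I_q})%type.

Definition compose (q : nat) (x y : pairq q) : pairq q :=
  (x.1, (x.2 :\ y.1) :|: y.2).

(* D^o : all compositions of s >= 1 elements of D, with every bracketing;
   i.e. the closure of D under binary composition. *)
Inductive comp_closure (q : nat) (D : {set pairq q}) : pairq q -> Prop :=
| cc_base x : x \in D -> comp_closure D x
| cc_comp x y : comp_closure D x -> comp_closure D y ->
    comp_closure D (compose x y).

Definition closureD (q : nat) (D : {set pairq q}) (x : pairq q) : Prop :=
  (exists2 y : pairq q, comp_closure D y & (y.1 = x.1 /\ y.2 \subset x.2))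
  \/ x.1 \in x.2.

Definition minD (q : nat) (P : pairq q -> Prop) (x : pairq q) : Prop :=
  P x /\ x.1 \notin x.2 /\
  ~ (exists C : {set 'I_q}, P (x.1, C) /\ C \proper x.2).

(* nonempty subsets of [q], indexing the variables y_A of S_[q] *)
Definition NE (q : nat) := {A : {set 'I_q} | A != set0}.
Definition nvars (q : nat) := #|{: NE q}|.

Definition yvar (k : fieldType) (q : nat) (A : NE q) : {mpoly k[nvars q]} :=
  'X_(enum_rank A).

Definition QD (q : nat) (D : {set pairq q}) (A : {set 'I_q}) : bool :=
  (A != set0) &&
  [forall x in D, (x.1 \in A) ==> (A :&: x.2 != set0)].

Definition eps (k : fieldType) (q : nat) (D : {set pairq q}) (i : 'I_q)
  : {mpoly k[nvars q]} :=
  \prod_(A : NE q | QD D (val A) && (i \in val A)) yvar k A.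

Definition in_ED (k : fieldType) (q : nat) (D : {set pairq q})
  (p : {mpoly k[nvars q]}) : Prop :=
  exists h : 'I_q -> {mpoly k[nvars q]}, p = \sum_(i < q) h i * eps k D i.

Definition mdvd (k : fieldType) (n : nat) (f g : {mpoly k[n]}) : Prop :=
  exists h : {mpoly k[n]}, g = h * f.

Definition lcm_eps (k : fieldType) (q : nat) (D : {set pairq q})
  (B : {set 'I_q}) : {mpoly k[nvars q]} :=
  'X_[\big[@mlcm _/0%MM]_(i in B) mlead (eps k D i)].

Definition DivE (k : fieldType) (q : nat) (D : {set pairq q}) (x : pairq q)
  : Prop :=
  x.2 != set0 /\ mdvd (eps k D x.1) (lcm_eps k D x.2).

(* Everything is governed by the family Q(D).  Each eps_{D,i} is the squarefree
   monomial in the y_A with A in Q(D) and i in A, so eps_b divides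
   lcm(eps_i : i in B) iff every A in Q(D) containing b meets B.  The closure
   of D consists exactly of these pairs: composition and extension preserve the
   property, and if (b,B) had it without lying in the closure, the set of c with
   (c,B) outside the closure would be a member of Q(D) containing b and disjoint
   from B.  Conversely Q(D) is read off from Div(E_D), and also from E_D itself:
   a monomial lies in a monomial ideal iff some generator divides it, and when
   all |B| >= 2 the complement of every singleton lies in Q(D), which forces the
   generators of equal ideals to agree index by index.  Finally the closure is
   upward closed and contains the trivial pairs, so it is determined by its
   minimal nontrivial elements. *)

From HB Require Import structures.
From mathcomp Require Import all_boot all_order all_algebra.
From mathcomp Require Import mpoly.
From Stdlib Require Import Classical ClassicalDescription.
Set Implicit Arguments. Unset Strict Implicit. Unset Printing Implicit Defensive.
Import GRing.Theory.
Local Open Scope ring_scope.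

Section MonomialDivisibility.
Variables (R : comNzRingType) (n : nat).

Lemma mcoeffMX_eq0 (p : {mpoly R[n]}) (b m : 'X_{1..n}) :
  ~~ (b <= m)%MM -> (p * 'X_[b])@_m = 0.
Proof.
move=> nbm; apply/eqP; rewrite mcoeff_eq0 (perm_mem (msuppMX p b)).
by apply: contra nbm => /mapP [m' _ ->]; exact: lem_addr.
Qed.

Lemma mpolyX_in_monomial_ideal (r : nat) (h : 'I_r -> {mpoly R[n]})
    (b : 'I_r -> 'X_{1..n}) m :
  'X_[m] = \sum_(i < r) h i * 'X_[b i] -> exists i, (b i <= m)%MM.
Proof.
move=> e; case: (boolP [exists i, b i <= m]%MM) => [/existsP //|/existsPn nle].
have := congr1 (mcoeff m) e; rewrite mcoeffX eqxx raddf_sum big1 => [|i _].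
  by move/eqP; rewrite oner_eq0.
exact: mcoeffMX_eq0.
Qed.

End MonomialDivisibility.

Lemma mdvdX (k : fieldType) (n : nat) (b m : 'X_{1..n}) :
  mdvd 'X_[b] ('X_[m] : {mpoly k[n]}) <-> (b <= m)%MM.
Proof.
split=> [[h e]|le]; last by exists 'X_[m - b]; rewrite -mpolyXD submK.
apply: contraT => nle; have := congr1 (mcoeff m) e.
by rewrite mcoeffX eqxx mcoeffMX_eq0 // => /eqP; rewrite oner_eq0.
Qed.

Section ExtremalGenerators.
Variables (q : nat) (D : {set pairq q}).

Definition QDi (i : 'I_q) (A : {set 'I_q}) : bool := QD D A && (i \in A).

Definition eps_exp (i : 'I_q) : 'X_{1..nvars q} :=
  (\sum_(A : NE q | QDi i (val A)) U_(enum_rank A))%MM.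

Lemma epsE (k : fieldType) (i : 'I_q) : eps k D i = 'X_[eps_exp i].
Proof. by rewrite /eps /eps_exp (big_morph _ (@mpolyXD _ k) (@mpolyX0 _ k)). Qed.

Lemma eps_expE (i : 'I_q) (j : 'I_(nvars q)) :
  eps_exp i j = QDi i (val (enum_val j)).
Proof.
rewrite /eps_exp mnm_sumE.
under eq_bigr => A _ do rewrite mnm1E -(inj_eq enum_val_inj) enum_rankK.
case: (boolP (QDi i _)) => Qj.
  by rewrite (bigD1 (enum_val j)) //= eqxx big1 // => A /andP [_ /negbTE ->].
by rewrite big1 // => A QA; case: eqP => // eA; rewrite -eA QA in Qj.
Qed.

Lemma QD_neq0 (A : {set 'I_q}) : QD D A -> A != set0.
Proof. by case/andP. Qed.

Lemma lcm_eps_expE (B : {set 'I_q}) (j : 'I_(nvars q)) :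
  (\big[@mlcm _/0%MM]_(i in B) eps_exp i) j = (\max_(i in B) eps_exp i j)%N.
Proof. by apply: (big_morph (fun m : 'X_{1..nvars q} => m j)) => [x y|]; rewrite mnmE. Qed.

Lemma eps_exp_le_lcm (b : 'I_q) (B : {set 'I_q}) :
  reflect (forall A, QD D A -> b \in A -> A :&: B != set0)
    (eps_exp b <= \big[@mlcm _/0%MM]_(i in B) eps_exp i)%MM.
Proof.
apply: (iffP mnm_lepP) => [le A QA bA | meet j].
  have := le (enum_rank (exist _ A (QD_neq0 QA) : NE q)).
  rewrite eps_expE lcm_eps_expE enum_rankK /QDi QA bA /=.
  apply: contraTneq => AB; rewrite -ltnNge ltnS; apply/bigmax_leqP => i iB.
  have : i \notin A :&: B by rewrite AB inE.
  by rewrite eps_expE enum_rankK inE iB andbT /QDi => /negbTE ->; rewrite andbF.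
rewrite eps_expE lcm_eps_expE; case: (boolP (QDi _ _)) => // /andP [QA bA].
have /set0Pn [i] := meet _ QA bA; rewrite inE => /andP [iA iB].
by apply: leq_trans (leq_bigmax_cond _ iB); rewrite eps_expE /QDi QA iA.
Qed.

Definition DivQ (x : pairq q) : Prop :=
  x.2 != set0 /\ forall A, QD D A -> x.1 \in A -> A :&: x.2 != set0.

Lemma DivEP (k : fieldType) (x : pairq q) : DivE k D x <-> DivQ x.
Proof.
rewrite /DivE /lcm_eps epsE.
under eq_bigr do rewrite epsE mleadXm.
by rewrite mdvdX; split=> -[B0 /eps_exp_le_lcm]; split.
Qed.

End ExtremalGenerators.

Definition asbool (P : Prop) : bool :=
  if excluded_middle_informative P then true else false.

Lemma asboolP (P : Prop) : reflect P (asbool P).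
Proof. by rewrite /asbool; case: excluded_middle_informative => h; constructor. Qed.

Section Closure.
Variables (q : nat) (D : {set pairq q}).
Hypothesis D_neq0 : forall x, x \in D -> x.2 != set0.

Lemma comp_closure_DivQ y : comp_closure D y -> DivQ D y.
Proof.
elim=> [x xD | x z _ [_ meet_x] _ [z_neq0 meet_z]].
  split=> [|A /andP [_ /forallP /(_ x) /implyP /(_ xD) /implyP //]].
  exact: D_neq0.
split=> [|A QA xA].
  by case/set0Pn: z_neq0 => e ez; apply/set0Pn; exists e; rewrite !inE ez orbT.
have /set0Pn [e] := meet_x A QA xA; rewrite inE => /andP [eA ex].
have [ez | nez] := eqVneq e z.1.
  have /set0Pn [f] := meet_z A QA (ltac:(by rewrite -ez)).
  by rewrite inE => /andP [fA fz]; apply/set0Pn; exists f; rewrite !inE fA fz !orbT.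
by apply/set0Pn; exists e; rewrite !inE eA nez ex.
Qed.

Lemma closureD_DivQ x : closureD D x -> DivQ D x.
Proof.
case=> [[y /comp_closure_DivQ [y_neq0 meet_y] [yx1 yx2]] | xx].
  split=> [|A QA xA]; first by apply: contraNneq y_neq0; rewrite -subset0 => <-.
  have /set0Pn [f] := meet_y A QA (ltac:(by rewrite yx1)); rewrite inE => /andP [fA fy].
  by apply/set0Pn; exists f; rewrite inE fA (subsetP yx2).
by split=> [|A _ xA]; apply/set0Pn; exists x.1; rewrite ?inE ?xA.
Qed.

Lemma closureD_up b (B C : {set 'I_q}) : closureD D (b, B) -> B \subset C -> closureD D (b, C).
Proof.
case=> [[y cy [yb yB]] | bB] BC; last by right; rewrite /= (subsetP BC).
by left; exists y => //; split=> //; apply: subset_trans BC.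
Qed.

Lemma closureD_comp a c (X Y : {set 'I_q}) :
  closureD D (a, X) -> closureD D (c, Y) -> closureD D (a, (X :\ c) :|: Y).
Proof.
case=> [[x0 ccx0 [/= x01 x02]] | /= aX] cY; last first.
  have [ac | nac] := eqVneq a c; last by right; rewrite /= !inE nac aX.
  by rewrite ac; apply: closureD_up cY (subsetUr _ _).
case: cY => [[y0 ccy0 [/= y01 y02]] | /= cY].
  left; exists (compose x0 y0); first exact: cc_comp.
  split=> //; apply/subsetP => e; rewrite /compose /= !inE y01.
  by case/orP => [/andP [-> /(subsetP x02) ->] | /(subsetP y02) ->]; rewrite ?orbT.
left; exists x0 => //; split=> //; apply: subset_trans x02 _.
by apply/subsetP => e eX; rewrite !inE eX andbT; have [->|] := eqVneq e c; rewrite ?cY ?orbT.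
Qed.

Lemma closureD_collapse c (B C X : {set 'I_q}) :
  (forall j, j \in C -> closureD D (j, B)) ->
  closureD D (c, X) -> X \subset C :|: B -> closureD D (c, B).
Proof.
move=> CB; move: {2}#|X :\: B| (leqnn #|X :\: B|) => n.
elim: n X => [|n IH] X XB cX XCB.
  by apply: closureD_up cX _; rewrite -setD_eq0 -cards_eq0 -leqn0.
have [sXB | /subsetPn [j jX jB]] := boolP (X \subset B); first exact: closureD_up cX sXB.
have jC : j \in C by move/subsetP/(_ j jX): XCB; rewrite inE (negbTE jB) orbF.
apply: (IH ((X :\ j) :|: B)); last 2 first.
- exact: closureD_comp cX (CB j jC).
- by rewrite subUset subsetUr andbT; apply: subset_trans (subsetDl _ _) XCB.
have -> : ((X :\ j) :|: B) :\: B = (X :\: B) :\ j.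
  by apply/setP => e; rewrite !inE; case: (e \in B); rewrite /= ?andbF ?orbF.
by move: XB; rewrite (cardsD1 j) !inE jX jB.
Qed.

Lemma DivQ_closureD x : DivQ D x -> closureD D x.
Proof.
case: x => b B [/= B_neq0 meetB]; apply: NNPP => nbB.
pose A := [set c | ~~ asbool (closureD D (c, B))].
have notinA c : c \notin A -> closureD D (c, B) by rewrite inE negbK => /asboolP.
have QA : QD D A.
  apply/andP; split; first by apply/set0Pn; exists b; rewrite inE; apply/asboolP.
  apply/forallP => y; apply/implyP => yD; apply/implyP => yA; apply/negP => /eqP Ay.
  have YB j : j \in y.2 -> closureD D (j, B).
    move=> jy; apply: notinA; apply: contra_eqN Ay => jA.
    by apply/set0Pn; exists j; rewrite inE jA.
  have cy : closureD D (y.1, y.2) by left; exists y; [exact: cc_base | split].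
  by move: yA; rewrite inE => /asboolP; apply; apply: closureD_collapse YB cy (subsetUl _ _).
have /set0Pn [j] := meetB A QA (ltac:(by rewrite inE; apply/asboolP)).
by rewrite !inE => /andP [/asboolP jA jB]; apply: jA; right.
Qed.

Lemma closureDP x : closureD D x <-> DivQ D x.
Proof. by split; [exact: closureD_DivQ | exact: DivQ_closureD]. Qed.

Lemma QDP (A : {set 'I_q}) :
  QD D A <-> A != set0 /\ forall x, DivQ D x -> x.1 \in A -> A :&: x.2 != set0.
Proof.
split=> [QA | [A0 meet]].
  by split=> [|x [_ meetx]]; [exact: QD_neq0 QA | exact: meetx A QA].
apply/andP; split=> //; apply/forallP => x; apply/implyP => xD; apply/implyP.
by apply: meet; apply: comp_closure_DivQ => //; exact: cc_base.
Qed.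

End Closure.

Section MinimalElements.
Variable q : nat.

Lemma minD_below (P : pairq q -> Prop) b (B : {set 'I_q}) :
  P (b, B) -> b \notin B -> exists2 C, minD P (b, C) & C \subset B.
Proof.
move: {2}#|B|.+1 (ltnSn #|B|) => n; elim: n B => // n IH B nB PB bB.
have [[C [PC CB]] | noC] := classic (exists C, P (b, C) /\ C \proper B).
  have bC : b \notin C by apply: contra bB; apply: (subsetP (proper_sub CB)).
  have [C' mC' C'C] := IH C (leq_trans (proper_card CB) nB) PC bC.
  by exists C' => //; apply: subset_trans C'C (proper_sub CB).
by exists B.
Qed.

Lemma minD_ext (P1 P2 : pairq q -> Prop) :
  (forall x, P1 x <-> P2 x) -> forall x, minD P1 x <-> minD P2 x.
Proof.
move=> P12 x; split=> -[Px [xx noC]]; (split; [exact/P12 | split=> // -[C [PC CB]]]);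
  by apply: noC; exists C; split=> //; apply/P12.
Qed.

Lemma sub_of_minD (P1 P2 : pairq q -> Prop) :
  (forall b (B C : {set 'I_q}), P2 (b, B) -> B \subset C -> P2 (b, C)) ->
  (forall b (B : {set 'I_q}), b \in B -> P2 (b, B)) ->
  (forall x, minD P1 x -> minD P2 x) -> forall x, P1 x -> P2 x.
Proof.
move=> P2_up P2_triv m12 [b B] PB; have [bB | nbB] := boolP (b \in B); first exact: P2_triv.
by have [C /m12 [P2C _] CB] := minD_below PB nbB; apply: P2_up P2C CB.
Qed.

End MinimalElements.

Section EqualQ.
Variables (q : nat) (D1 D2 : {set pairq q}).

Lemma eq_in_ED (k : fieldType) :
  QD D1 =1 QD D2 -> forall p : {mpoly k[nvars q]}, in_ED D1 p <-> in_ED D2 p.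
Proof.
move=> eQ; have eeps i : eps k D1 i = eps k D2 i by apply: eq_bigl => A; rewrite eQ.
by move=> p; split=> -[h ->]; exists h; apply: eq_bigr => i _; rewrite eeps.
Qed.

Lemma eq_DivQ : QD D1 =1 QD D2 -> forall x, DivQ D1 x <-> DivQ D2 x.
Proof.
by move=> eQ x; split=> -[x2 meet]; split=> // A; [rewrite -eQ | rewrite eQ]; apply: meet.
Qed.

End EqualQ.

Lemma eq_QD_of_DivQ (q : nat) (D1 D2 : {set pairq q}) :
  (forall x, x \in D1 -> x.2 != set0) -> (forall x, x \in D2 -> x.2 != set0) ->
  (forall x, DivQ D1 x <-> DivQ D2 x) -> QD D1 =1 QD D2.
Proof.
move=> D1_neq0 D2_neq0 eDiv A; apply/idP/idP.
  move/(QDP D1_neq0) => [A0 meet]; apply/(QDP D2_neq0).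
  by split=> // x /eDiv; apply: meet.
move/(QDP D2_neq0) => [A0 meet]; apply/(QDP D1_neq0).
by split=> // x /eDiv; apply: meet.
Qed.

Lemma eq_DivE_QD (k : fieldType) (q : nat) (D1 D2 : {set pairq q}) :
  (forall x, x \in D1 -> x.2 != set0) -> (forall x, x \in D2 -> x.2 != set0) ->
  (forall x, DivE k D1 x <-> DivE k D2 x) <-> QD D1 =1 QD D2.
Proof.
move=> D1_neq0 D2_neq0; split=> [eDiv | /eq_DivQ eDiv x]; last by rewrite !DivEP.
by apply: eq_QD_of_DivQ => // x; split=> /(DivEP _ k) /eDiv /DivEP.
Qed.

Lemma QDi_setC1 (q : nat) (D : {set pairq q}) (i j : 'I_q) :
  (forall x, x \in D -> 2 <= #|x.2|)%N -> i != j -> QDi D i (~: [set j]).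
Proof.
move=> D_card ij; rewrite /QDi !inE ij andbT; apply/andP; split.
  by apply/set0Pn; exists i; rewrite !inE.
apply/forallP => x; apply/implyP => xD; apply/implyP => _.
apply: contraTneq (D_card x xD) => Ex; rewrite -ltnNge ltnS -(cards1 j).
by apply/subset_leq_card; rewrite -setD_eq0 setDE setIC Ex.
Qed.

Lemma eps_in_ED (k : fieldType) (q : nat) (D : {set pairq q}) i : in_ED D (eps k D i).
Proof.
exists (fun j => (j == i)%:R); rewrite (bigD1 i) //= eqxx mul1r big1 ?addr0 // => j.
by move/negbTE ->; rewrite mul0r.
Qed.

Lemma in_ED_eps (k : fieldType) (q : nat) (D1 D2 : {set pairq q}) i :
  in_ED D1 (eps k D2 i) -> exists j, forall A, QDi D1 j A -> QDi D2 i A.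
Proof.
rewrite epsE => -[h]; under eq_bigr do rewrite epsE.
move=> /mpolyX_in_monomial_ideal [j /mnm_lepP le]; exists j => A QA.
have := le (enum_rank (exist _ A (QD_neq0 (proj1 (andP QA))) : NE q)).
by rewrite !eps_expE enum_rankK /= QA lt0b.
Qed.

Lemma sub_QD_of_in_ED (k : fieldType) (q : nat) (D1 D2 : {set pairq q}) :
  (forall x, x \in D2 -> 2 <= #|x.2|)%N ->
  (forall p : {mpoly k[nvars q]}, in_ED D1 p <-> in_ED D2 p) ->
  forall A, QD D1 A -> QD D2 A.
Proof.
move=> D2_card eED A QA.
have [i iA] : exists i, i \in A by case/set0Pn: (QD_neq0 QA) => i; exists i.
have [j ji] := in_ED_eps (proj2 (eED _) (eps_in_ED k D2 i)).
have [l lj] := in_ED_eps (proj1 (eED _) (eps_in_ED k D1 j)).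
have notC1 D m : QDi D m (~: [set m]) = false by rewrite /QDi !inE eqxx andbF.
have li : l = i.
  by apply/eqP; apply: contraT => /(QDi_setC1 D2_card) /lj /ji; rewrite notC1.
have ji_eq : j = i.
  apply/eqP; apply: contraT; rewrite eq_sym => /(QDi_setC1 D2_card).
  by rewrite -li => /lj; rewrite notC1.
by have /andP [] := ji A (ltac:(by rewrite /QDi QA ji_eq iA)).
Qed.

Lemma eq_in_ED_QD (k : fieldType) (q : nat) (D1 D2 : {set pairq q}) :
  (forall x, x \in D1 -> 2 <= #|x.2|)%N -> (forall x, x \in D2 -> 2 <= #|x.2|)%N ->
  (forall p : {mpoly k[nvars q]}, in_ED D1 p <-> in_ED D2 p) <-> QD D1 =1 QD D2.
Proof.
move=> D1_card D2_card; split=> [eED A | /eq_in_ED //].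
by apply/idP/idP; apply: sub_QD_of_in_ED => // p; split=> /eED.
Qed.

Lemma closureD_DivE (k : fieldType) (q : nat) (D : {set pairq q}) x :
  (forall x, x \in D -> x.2 != set0) -> closureD D x <-> DivE k D x.
Proof. by move=> D_neq0; rewrite DivEP closureDP. Qed.

Lemma closureD_of_minD (q : nat) (D1 D2 : {set pairq q}) :
  (forall x, minD (closureD D1) x -> minD (closureD D2) x) ->
  forall x, closureD D1 x -> closureD D2 x.
Proof.
apply: sub_of_minD => [b B C | b B bB]; [exact: closureD_up | by right].
Qed.

Unset Implicit Arguments.

Theorem theorem3p11 (k : fieldType) (q : nat) (D1 D2 : {set pairq q}) :
  (0 < q)%N ->
  D1 != set0 -> D2 != set0 ->
  (forall x : pairq q, x \in D1 :|: D2 -> (2 <= #|x.2|)%N) ->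
  [/\ ((forall p : {mpoly k[nvars q]}, in_ED D1 p <-> in_ED D2 p) <->
        (forall x, DivE k D1 x <-> DivE k D2 x)),
      ((forall x, DivE k D1 x <-> DivE k D2 x) <->
        (forall x, closureD D1 x <-> closureD D2 x))
    & ((forall x, closureD D1 x <-> closureD D2 x) <->
        (forall x, minD (closureD D1) x <-> minD (closureD D2) x))].
Proof.
move=> _ _ _ D12_card.
have D1_card x : x \in D1 -> (2 <= #|x.2|)%N.
  by move=> xD; apply: D12_card; rewrite inE xD.
have D2_card x : x \in D2 -> (2 <= #|x.2|)%N.
  by move=> xD; apply: D12_card; rewrite inE xD orbT.
have card_neq0 (D : {set pairq q}) :
    (forall x, x \in D -> 2 <= #|x.2|)%N -> forall x, x \in D -> x.2 != set0.
  by move=> D_card x /D_card /ltnW; rewrite card_gt0.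
have D1_neq0 := card_neq0 _ D1_card; have D2_neq0 := card_neq0 _ D2_card.
split.
- by rewrite eq_in_ED_QD // eq_DivE_QD.
- split=> e x.
    by rewrite !(closureD_DivE k) //; apply: e.
  by rewrite -!(closureD_DivE k) //; apply: e.
- split=> [e | e x]; first exact: minD_ext.
  by split; apply: closureD_of_minD => y /e.
Qed.
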